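(* In the setting below, fix a test query $\mathbf q\in\mathbb{R}^d$, a stopping step $\hat N\ge1$ and two tokens $h,h'\in\mathcal H$. Suppose that there exist a vector $\boldsymbol\mu^{(0)}$ (the common initialization, $\boldsymbol\mu^{(0)}_g=\boldsymbol\mu^{(0)}$ for all $g$), vectors $\mathbf r_h,\mathbf r_{h'}$ and $\xi\ge0$ with $\|\mathbf r_h\|,\|\mathbf r_{h'}\|\le\xi$ such that $$\mathbb E\big[\boldsymbol\mu^{(\hat N)}_g\big]=\boldsymbol\mu^{(0)}+\frac{\eta\hat N p_g}{\sqrt d}(\mathbf w_g-\bar{\mathbf w})+\mathbf r_g\qquad (g\in\{h,h'\}).$$ Define $$\mathrm{AR}(h,h')=\frac{\mathbb E\big[M_h(\mathbf q;\boldsymbol\mu^{(\hat N)})/M_{h'}(\mathbf q;\boldsymbol\mu^{(\hat N)})\big]}{p_h/p_{h'}},$$ the expectation being over the training randomness. Then $$\mathrm{AR}(h,h')\ \ge\ \exp\Big(\frac{\eta\hat N}{d}\big\langle\mathbf q,\ p_h(\mathbf w_h-\bar{\mathbf w})-p_{h'}(\mathbf w_{h'}-\bar{\mathbf w})\big\rangle-\frac{2\xi\|\mathbf q\|}{\sqrt d}\Big).$$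
   Context: Let $\mathcal H$ be a finite set of tokens and $T\ge1$. Each history position $j\in[T]$ carries a token $h_j\in\mathcal H$; let $S_h=\{j\in[T]:h_j=h\}$, assume $|S_h|\ge1$ for all $h$, and let $p_h=|S_h|/T$. Each token $h$ has a key parameter $\boldsymbol\mu_h\in\mathbb{R}^d$, and the token exposure for a query $\mathbf q\in\mathbb{R}^d$ is $M_h(\mathbf q;\boldsymbol\mu)=\frac{|S_h|\exp(\langle\mathbf q,\boldsymbol\mu_h\rangle/\sqrt d)}{\sum_{h''\in\mathcal H}|S_{h''}|\exp(\langle\mathbf q,\boldsymbol\mu_{h''}\rangle/\sqrt d)}$. Training pairs $(\mathbf q^{(n)},X^{(n)})_{n\ge0}$ are i.i.d., with $\|\mathbf q^{(n)}\|\le B_q$ almost surely, $\Pr(X^{(n)}=h)=p_h$, $\mathbf w_h=\mathbb E[\mathbf q^{(n)}\mid X^{(n)}=h]$ and $\bar{\mathbf w}=\sum_h p_h\mathbf w_h$. The parameters $\boldsymbol\mu^{(n)}$ are produced by SGD with learning rate $\eta>0$ on the loss $-\log M_{X^{(n)}}(\mathbf q^{(n)};\boldsymbol\mu^{(n)})$, starting from a common initialization; $\boldsymbol\mu^{(\hat N)}$ is the (random) iterate at step $\hat N$. *)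

From HB Require Import structures.
From mathcomp Require Import all_boot all_order all_algebra.
From mathcomp Require Import all_classical all_reals all_analysis.
Set Implicit Arguments. Unset Strict Implicit. Unset Printing Implicit Defensive.
Import Order.TTheory GRing.Theory Num.Theory.
Local Open Scope classical_set_scope.
Local Open Scope ring_scope.

Section Defs.
Variable R : realType.
Variable d : nat.

Definition dotv (u v : 'rV[R]_d) : R := \sum_(i < d) u 0 i * v 0 i.
Definition vnorm (u : 'rV[R]_d) : R := Num.sqrt (dotv u u).

Variable H : finType.
Variable T : nat.
Variable hist : 'I_T -> H.

Definition cnt (g : H) : nat := #|[set j : 'I_T | hist j == g]|.
Definition pfreq (g : H) : R := (cnt g)%:R / T%:R.

Definition expo_num (q : 'rV[R]_d) (mu : H -> 'rV[R]_d) (g : H) : R :=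
  (cnt g)%:R * expR (dotv q (mu g) / Num.sqrt d%:R).
Definition exposure (q : 'rV[R]_d) (mu : H -> 'rV[R]_d) (g : H) : R :=
  expo_num q mu g / \sum_(g'' : H) expo_num q mu g''.

Variables (dm : measure_display) (Omega : measurableType dm).
Variable P : probability Omega R.
Variable qs : nat -> Omega -> 'rV[R]_d.
Variable X : nat -> Omega -> H.

(* SGD with learning rate eta on the loss -log M_{X^(n)}(q^(n); mu^(n)),
   from the common initialization mu0.  The gradient of this loss with
   respect to mu_g is  -(1[g = X^(n)] - M_g(q^(n); mu^(n))) q^(n) / sqrt d. *)
Fixpoint sgd (eta : R) (mu0 : 'rV[R]_d) (n : nat) (w : Omega) : H -> 'rV[R]_d :=
  match n with
  | 0 => fun _ => mu0
  | n'.+1 =>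
      let mu := sgd eta mu0 n' w in
      fun g => mu g + (eta / Num.sqrt d%:R *
                 ((X n' w == g)%:R - exposure (qs n' w) mu g)) *: qs n' w
  end.

(* Events generating sigma(q^(n), X^(n)) *)
Definition sample_gen (n : nat) : set (set Omega) :=
  [set A | (exists i : 'I_d, exists B : set R,
              measurable B /\ A = [set w | B (qs n w 0 i)])
           \/ (exists g : H, A = [set w | X n w = g])].

Definition pairs_independent : Prop :=
  forall (J : seq nat) (E : nat -> set Omega), uniq J ->
    (forall n, n \in J -> <<s sample_gen n >> (E n)) ->
    P (\big[setI/setT]_(n <- J) E n) = (\prod_(n <- J) P (E n))%E.

(* "the pairs (q^(n), X^(n)) are identically distributed": their joint laws
   agree on the pi-system of measurable rectangles {X = g} x prod_i B_i. *)
Definition rect_event (n : nat) (g : H) (B : 'I_d -> set R) : set Omega :=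
  [set w | X n w = g /\ forall i, B i (qs n w 0 i)].
Definition pairs_ident_distr : Prop :=
  forall n g (B : 'I_d -> set R), (forall i, measurable (B i)) ->
    P (rect_event n g B) = P (rect_event 0 g B).

Definition training_setup (Bq : R) : Prop :=
  (forall n (i : 'I_d), measurable_fun setT (fun w => qs n w 0 i)) /\
  (forall n g, measurable [set w | X n w = g]) /\
  pairs_independent /\ pairs_ident_distr /\
  (forall n, {ae P, forall w, vnorm (qs n w) <= Bq}) /\
  (forall n g, P [set w | X n w = g] = (pfreq g)%:E).

(* w_g = E[q^(n) | X^(n) = g] = E[q^(n) 1{X^(n)=g}] / Pr(X^(n) = g) *)
Definition wvec (g : H) : 'rV[R]_d :=
  \row_i ((\int[P]_(w in [set w | X 0 w = g]) qs 0 w 0 i)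
            / fine (P [set w | X 0 w = g])).
Definition wbar : 'rV[R]_d := \sum_(g : H) pfreq g *: wvec g.

Definition Emu (eta : R) (mu0 : 'rV[R]_d) (n : nat) (g : H) : 'rV[R]_d :=
  \row_i (\int[P]_w (sgd eta mu0 n w g 0 i)).

Definition AR (eta : R) (mu0 : 'rV[R]_d) (Nhat : nat) (q : 'rV[R]_d)
    (h h' : H) : \bar R :=
  ('E_P[fun w => (exposure q (sgd eta mu0 Nhat w) h /
                  exposure q (sgd eta mu0 Nhat w) h')%R] *
   ((pfreq h / pfreq h')^-1)%:E)%E.

End Defs.

From HB Require Import structures.
From mathcomp Require Import all_boot all_order all_algebra.
From mathcomp Require Import all_classical all_reals all_analysis.
From mathcomp Require Import ring lra measurable_realfun.
Import Order.TTheory GRing.Theory Num.Theory.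
Local Open Scope classical_set_scope.
Local Open Scope ring_scope.

(* The exposure ratio is [M_h / M_h' = (p_h / p_h') * exp Y] with
   [Y = <q, mu_h - mu_h'> / sqrt d], so [AR(h, h') = E[exp Y]].  Jensen's
   inequality gives [AR >= exp (E Y)]; [E Y] is linear in the mean parameters,
   so the drift hypotheses evaluate it up to the term [<q, r_h - r_h'> / sqrt d],
   which Cauchy-Schwarz bounds below by [-2 xi |q| / sqrt d]. *)

Section InnerProduct.
Context {R : realType} {d : nat}.
Implicit Types u v w : 'rV[R]_d.

Lemma dotvD u v w : dotv u (v + w) = dotv u v + dotv u w.
Proof. by rewrite /dotv -big_split; apply: eq_bigr => i _; rewrite !mxE mulrDr. Qed.

Lemma dotvB u v w : dotv u (v - w) = dotv u v - dotv u w.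
Proof. by rewrite /dotv -sumrB; apply: eq_bigr => i _; rewrite !mxE mulrBr. Qed.

Lemma dotvZ u (a : R) v : dotv u (a *: v) = a * dotv u v.
Proof. by rewrite /dotv mulr_sumr; apply: eq_bigr => i _; rewrite !mxE mulrCA. Qed.

Lemma dotvv_ge0 u : 0 <= dotv u u.
Proof. by apply: sumr_ge0 => i _; rewrite -expr2 sqr_ge0. Qed.

Lemma dotv_sqr_le u v : dotv u v ^+ 2 <= dotv u u * dotv v v.
Proof.
set A := dotv u u; set B := dotv v v; set C := dotv u v.
have quad_ge0 t : 0 <= t ^+ 2 * A - 2 * t * C + B.
  have -> : t ^+ 2 * A - 2 * t * C + B = \sum_(i < d) (t * u 0 i - v 0 i) ^+ 2.
    rewrite /A /B /C /dotv !mulr_sumr -sumrB -big_split /=.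
    by apply: eq_bigr => i _; ring.
  by apply: sumr_ge0 => i _; rewrite sqr_ge0.
have [A0|A_neq0] := eqVneq A 0.
  have sumsq0 : \sum_(j < d) u 0 j ^+ 2 = 0.
    by rewrite -[RHS]A0 /A /dotv; apply: eq_bigr => j _; rewrite expr2.
  have u0 i : u 0 i = 0.
    by apply/eqP; rewrite -sqrf_eq0; apply/eqP/(psumr_eq0P _ sumsq0) => // j _; rewrite sqr_ge0.
  have -> : C = 0 by rewrite /C /dotv big1 // => i _; rewrite u0 mul0r.
  by rewrite expr0n mulr_ge0 ?dotvv_ge0.
have A_gt0 : 0 < A by rewrite lt_def A_neq0 dotvv_ge0.
have := quad_ge0 (C / A).
have -> : (C / A) ^+ 2 * A - 2 * (C / A) * C + B = B - C ^+ 2 / A.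
  by field; rewrite gt_eqF.
by rewrite subr_ge0 ler_pdivrMr // mulrC.
Qed.

Lemma ler_norm_dotv u v : `|dotv u v| <= vnorm u * vnorm v.
Proof.
rewrite /vnorm -sqrtrM ?dotvv_ge0 // -sqrtr_sqr ler_sqrt ?dotv_sqr_le //.
by rewrite mulr_ge0 ?dotvv_ge0.
Qed.

Lemma ler_norm_dotv_bound u v (xi : R) :
  vnorm v <= xi -> `|dotv u v| <= vnorm u * xi.
Proof.
by move=> vxi; rewrite (le_trans (ler_norm_dotv u v)) // ler_wpM2l ?sqrtr_ge0.
Qed.

Lemma dotv_perturbed_sub_ge (c xi : R) u m v v' r r' : 0 <= c ->
  vnorm r <= xi -> vnorm r' <= xi ->
  c * (dotv u (v - v') - 2 * xi * vnorm u) <=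
  dotv u (c *: (m + v + r - (m + v' + r'))).
Proof.
move=> c_ge0 /(ler_norm_dotv_bound u) /ler_normlP[r_lo _].
move=> /(ler_norm_dotv_bound u) /ler_normlP[_ r'_up].
rewrite dotvZ ler_wpM2l // !(dotvB, dotvD).
lra.
Qed.

End InnerProduct.

Section IntegralInnerProduct.
Context {dm : measure_display} {Omega : measurableType dm} {R : realType}.
Variable mu : {measure set Omega -> \bar R}.
Context {d : nat} (q : 'rV[R]_d) {f : Omega -> 'rV[R]_d}.
Hypothesis f_int : forall i, mu.-integrable setT (EFin \o fun w => f w 0 i).

Let dotv_EFin_sum w :
  ((dotv q (f w))%:E = \sum_(i < d) (q 0 i)%:E * (f w 0 i)%:E)%E.
Proof. by rewrite /dotv -sumEFin; apply: eq_bigr => i _; rewrite EFinM. Qed.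

Let coord_int i :
  mu.-integrable setT (fun w => (q 0 i)%:E * (f w 0 i)%:E)%E.
Proof. exact: integrableZl (f_int i). Qed.

Lemma integrable_dotv : mu.-integrable setT (EFin \o fun w => dotv q (f w)).
Proof.
apply: (eq_integrable measurableT (fun w => \sum_(i < d) (q 0 i)%:E * (f w 0 i)%:E)%E).
  by move=> w _; rewrite /= dotv_EFin_sum.
by apply: integrable_sum => // i _; exact: coord_int.
Qed.

Lemma Rintegral_dotv :
  \int[mu]_w dotv q (f w) = dotv q (\row_i \int[mu]_w f w 0 i).
Proof.
rewrite /Rintegral; under eq_integral do rewrite dotv_EFin_sum.
rewrite integral_sum // (eq_bigr _ (fun i _ => integralZl measurableT (f_int i) (q 0 i))).
have int_fin i : (\int[mu]_w (f w 0 i)%:E)%E \is a fin_num.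
  exact: (integrable_fin_num measurableT (f_int i)).
rewrite -EFin_sum_fine /=; last by move=> i _; rewrite fin_numM ?int_fin.
by apply: eq_bigr => i _; rewrite mxE fineM ?int_fin.
Qed.

End IntegralInnerProduct.

Section IntegralInnerProductScaledDiff.
Context {dm : measure_display} {Omega : measurableType dm} {R : realType}.
Variable mu : {measure set Omega -> \bar R}.
Context {d : nat} (q : 'rV[R]_d) (c : R) {F G : Omega -> 'rV[R]_d}.
Hypothesis F_int : forall i, mu.-integrable setT (EFin \o fun w => F w 0 i).
Hypothesis G_int : forall i, mu.-integrable setT (EFin \o fun w => G w 0 i).

Let sub_int i : mu.-integrable setT (EFin \o fun w => F w 0 i - G w 0 i).
Proof.
exact: eq_integrable measurableT _ _ _ (integrableB measurableT (F_int i) (G_int i)).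
Qed.

Let scale_sub_int i : mu.-integrable setT (EFin \o fun w => (c *: (F w - G w)) 0 i).
Proof.
apply: (eq_integrable measurableT _ _ _ (integrableZl measurableT c (sub_int i))).
by move=> w _; rewrite /= !mxE EFinM.
Qed.

Lemma integrable_dotv_scale_sub :
  mu.-integrable setT (EFin \o fun w => dotv q (c *: (F w - G w))).
Proof. exact: integrable_dotv scale_sub_int. Qed.

Lemma Rintegral_dotv_scale_sub :
  \int[mu]_w dotv q (c *: (F w - G w)) =
  dotv q (c *: (\row_i \int[mu]_w F w 0 i - \row_i \int[mu]_w G w 0 i)).
Proof.
rewrite (Rintegral_dotv mu q scale_sub_int); congr dotv; apply/rowP => i.
rewrite !mxE -(RintegralB measurableT (F_int i) (G_int i)).
under eq_Rintegral do rewrite !mxE.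
exact: RintegralZl measurableT (sub_int i).
Qed.

End IntegralInnerProductScaledDiff.

Section JensenExp.
Context {dm : measure_display} {Omega : measurableType dm} {R : realType}.
Variable P : probability Omega R.

(* Integrate the tangent line [expR m * (1 + y - m) <= expR y] at [m = E Y]. *)
Lemma jensen_expR (Y : Omega -> R) : P.-integrable setT (EFin \o Y) ->
  ((expR (\int[P]_w Y w))%:E <= \int[P]_w (expR (Y w))%:E)%E.
Proof.
move=> Y_int; set m := \int[P]_w Y w.
have mY : measurable_fun setT Y by case/integrableP: Y_int => /measurable_EFinP.
have mexpY : measurable_fun setT (fun w => (expR (Y w))%:E).
  exact/measurable_EFinP/(measurableT_comp (@measurable_expR R) mY).
pose L w := expR m * (Y w + (1 - m)).
have YD_int : P.-integrable setT (EFin \o fun w => Y w + (1 - m)).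
  apply: (eq_integrable measurableT _ _ _ (integrableD measurableT Y_int
    (finite_measure_integrable_cst P (1 - m) measurableT))) => //.
have L_int : P.-integrable setT (EFin \o L) by exact: integrableZl YD_int.
have L_mean : \int[P]_w L w = expR m.
  rewrite RintegralZl // RintegralD //; last exact: finite_measure_integrable_cst.
  rewrite Rintegral_cst // (_ : fine (P _) = 1); last by rewrite probability_setT.
  by rewrite mulr1 -/m addrC subrK mulr1.
have L_le w : L w <= expR (Y w).
  rewrite /L -[in leRHS](subrK m (Y w)) expRD mulrC ler_pM2r ?expR_gt0 //.
  by rewrite addrCA expR_ge1Dx.
have [expY_int|expY_nint] := pselect (P.-integrable setT (fun w => (expR (Y w))%:E)).
  rewrite -L_mean /Rintegral fineK; last exact: integrable_fin_num L_int.
  by apply: le_integral => // w _; rewrite lee_fin L_le.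
suff -> : (\int[P]_w (expR (Y w))%:E = +oo)%E by rewrite leey.
apply/eqP; rewrite eq_le leey /= leNgt; apply/negP => fin_int.
apply: expY_nint; apply/integrableP; split => //.
by under eq_integral do rewrite gee0_abs ?lee_fin ?expR_ge0 //.
Qed.

End JensenExp.

Section Exposure.
Context {R : realType} {d : nat} {H : finType} {T : nat} {hist : 'I_T -> H}.
Hypothesis cnt_gt0 : forall g : H, (0 < cnt hist g)%N.

Lemma pfreq_ratio h h' :
  pfreq R hist h / pfreq R hist h' = (cnt hist h)%:R / (cnt hist h')%:R.
Proof.
have T_gt0 : (0 < T)%N.
  by rewrite -[T]card_ord (leq_trans (cnt_gt0 h)) ?max_card.
by rewrite /pfreq; field; rewrite !pnatr_eq0 -!lt0n cnt_gt0 T_gt0.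
Qed.

Lemma exposure_ratio (q : 'rV[R]_d) (mu : H -> 'rV[R]_d) h h' :
  exposure hist q mu h / exposure hist q mu h' =
  (cnt hist h)%:R / (cnt hist h')%:R *
    expR (dotv q (mu h - mu h') / Num.sqrt d%:R).
Proof.
have num_gt0 g : 0 < expo_num hist q mu g.
  by rewrite /expo_num mulr_gt0 ?expR_gt0 // ltr0n.
rewrite /exposure; set S := \sum_g _.
have S_gt0 : 0 < S.
  rewrite /S (bigD1 h) //= ltr_pwDl ?num_gt0 //.
  by apply: sumr_ge0 => g _; exact: ltW.
rewrite /expo_num dotvB mulrBl expRB.
by field; rewrite !gt_eqF ?expR_gt0 ?ltr0n.
Qed.

Context {dm : measure_display} {Omega : measurableType dm}.
Variable P : probability Omega R.

Lemma expectation_exposure_ratio (q : 'rV[R]_d) (mu : Omega -> H -> 'rV[R]_d) h h' :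
  measurable_fun setT (fun w => dotv q (mu w h - mu w h') / Num.sqrt d%:R) ->
  ('E_P[fun w => (exposure hist q (mu w) h / exposure hist q (mu w) h')%R] *
     ((pfreq R hist h / pfreq R hist h')^-1)%:E =
   \int[P]_w (expR (dotv q (mu w h - mu w h') / Num.sqrt d%:R))%:E)%E.
Proof.
move=> mY; rewrite pfreq_ratio unlock /=.
set c := (cnt hist h)%:R / (cnt hist h')%:R.
have c_gt0 : 0 < c by rewrite divr_gt0 ?ltr0n.
under eq_integral do rewrite exposure_ratio EFinM.
rewrite ge0_integralZl_EFin ?ltW //; last first.
  exact/measurable_EFinP/(measurableT_comp (@measurable_expR R) mY).
by rewrite muleAC -EFinM divrr ?unitfE ?gt_eqF // mul1e.
Qed.

End Exposure.

Theorem proposition2 (R : realType) (d : nat) (H : finType) (T : nat)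
    (hist : 'I_T -> H) (dm : measure_display) (Omega : measurableType dm)
    (P : probability Omega R) (qs : nat -> Omega -> 'rV[R]_d)
    (X : nat -> Omega -> H) (Bq eta : R) (mu0 : 'rV[R]_d)
    (q : 'rV[R]_d) (Nhat : nat) (h h' : H) (r_h r_h' : 'rV[R]_d) (xi : R) :
  (0 < d)%N ->
  (forall g : H, (0 < cnt hist g)%N) ->
  0 < eta ->
  training_setup hist P qs X Bq ->
  (1 <= Nhat)%N ->
  (forall (g : H) (i : 'I_d),
      P.-integrable setT (fun w => (sgd hist qs X eta mu0 Nhat w g 0 i)%:E)) ->
  0 <= xi -> vnorm r_h <= xi -> vnorm r_h' <= xi ->
  Emu hist P qs X eta mu0 Nhat h =
    mu0 + (eta * Nhat%:R * pfreq R hist h / Num.sqrt d%:R) *: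
            (wvec P qs X h - wbar hist P qs X) + r_h ->
  Emu hist P qs X eta mu0 Nhat h' =
    mu0 + (eta * Nhat%:R * pfreq R hist h' / Num.sqrt d%:R) *:
            (wvec P qs X h' - wbar hist P qs X) + r_h' ->
  (AR hist P qs X eta mu0 Nhat q h h' >=
   (expR (eta * Nhat%:R / d%:R *
            dotv q (pfreq R hist h *: (wvec P qs X h - wbar hist P qs X)
                    - pfreq R hist h' *: (wvec P qs X h' - wbar hist P qs X))
          - 2 * xi * vnorm q / Num.sqrt d%:R))%:E)%E.
Proof.
move=> d_gt0 cnt_gt0 _ _ _ mu_int _ r_h_le r_h'_le Emu_h Emu_h'.
set s := Num.sqrt d%:R; have s_gt0 : 0 < s by rewrite sqrtr_gt0 ltr0n.
set mu := sgd hist qs X eta mu0 Nhat.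
have Y_int := integrable_dotv_scale_sub P q s^-1 (mu_int h) (mu_int h').
have Y_eq w : dotv q (mu w h - mu w h') / s = dotv q (s^-1 *: (mu w h - mu w h')).
  by rewrite dotvZ mulrC.
rewrite /AR (expectation_exposure_ratio cnt_gt0 P q mu); last first.
  by under eq_fun do rewrite Y_eq; exact/measurable_EFinP/(measurable_int _ Y_int).
under eq_integral do rewrite Y_eq.
apply: le_trans (jensen_expR P _ Y_int).
rewrite lee_fin ler_expR (Rintegral_dotv_scale_sub P q s^-1 (mu_int h) (mu_int h')).
rewrite -[\row_i _]/(Emu hist P qs X eta mu0 Nhat h) Emu_h.
rewrite -[\row_i _]/(Emu hist P qs X eta mu0 Nhat h') Emu_h'.
have s_inv_ge0 : 0 <= s^-1 by rewrite invr_ge0 ltW.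
apply: le_trans (dotv_perturbed_sub_ge _ _ _ _ _ _ _ _ s_inv_ge0 r_h_le r_h'_le).
have d_ss : d%:R = s * s by rewrite -expr2 sqr_sqrtr ?ler0n.
rewrite le_eqVlt; apply/predU1l.
rewrite -/s d_ss !(dotvB, dotvZ).
by field; rewrite gt_eqF.
Qed.
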